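(* Let $m\ge1$ and $A\ge1$ be integers, and let $\alpha\neq\beta$ be elements of $\mathbb{Z}[\zeta_m]$ whose representations are bounded in $[-A,A]$. Then $$|\alpha-\beta|\ge\frac{1}{(2A\,\phi(m)+1)^{\phi(m)-1}}.$$
   Context: $\zeta_m$ is a primitive $m$-th root of unity and $\phi$ is Euler's totient function. The representation of $\alpha\in\mathbb{Z}[\zeta_m]$ is the unique tuple of integers $(a_0,\dots,a_{\phi(m)-1})$ with $\alpha=\sum_{i=0}^{\phi(m)-1}a_i\zeta_m^i$; it is bounded in $[-A,A]$ if $-A\le a_i\le A$ for all $i$. *)

From mathcomp Require Import all_boot all_order all_algebra all_field.
Set Implicit Arguments. Unset Strict Implicit. Unset Printing Implicit Defensive.
Import Order.TTheory GRing.Theory Num.Theory.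
Local Open Scope ring_scope.

Definition repr_val (m : nat) (zeta : algC) (a : 'I_(totient m) -> int) : algC :=
  \sum_(i < totient m) (a i)%:~R * zeta ^+ i.

Definition repr_bounded (m : nat) (A : int) (a : 'I_(totient m) -> int) : Prop :=
  forall i, -A <= a i <= A.

From mathcomp Require Import all_boot all_order all_algebra all_field.
From mathcomp Require Import zify.
Set Implicit Arguments. Unset Strict Implicit. Unset Printing Implicit Defensive.
Import Order.TTheory GRing.Theory Num.Theory.
Local Open Scope ring_scope.

(* Let n = phi(m) and gamma = alpha - beta = P(zeta), where P is the integer
   polynomial of degree < n whose coefficients are the differences of the two
   representations.  The proof is a norm argument:
   - the product of P(w) over the n primitive m-th roots of unity w (the
     Galois conjugates of zeta) is an integer: it is the determinant of the
     integer matrix of multiplication by P modulo the monic polynomial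
     'Phi_m, which the Vandermonde matrix of the roots diagonalises;
   - this integer is non-zero, because each conjugate P(zeta^k) is the image
     of P(zeta) <> 0 under a field automorphism, hence its modulus is >= 1;
   - each factor P(w) has modulus at most 2 A n, since |w| = 1;
   so |P(zeta)| >= 1 / (2 A n + 1)^(n-1). *)

Local Notation liftC := (map_poly (intr : int -> algC)).

Lemma norm_unity_root (x : algC) (m : nat) :
  (0 < m)%N -> x ^+ m = 1 -> `|x| = 1.
Proof.
move=> m_gt0 xm1; apply/eqP; rewrite -(pexpr_eq1 m_gt0) ?normr_ge0 //.
by rewrite -normrX xm1 normr1.
Qed.

Definition prim_roots (zeta : algC) (m : nat) : seq algC :=
  [seq zeta ^+ k | k <- [seq k <- iota 0 m | coprime k m]].

Lemma cyclotomic_prim_roots (zeta : algC) (m : nat) :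
  cyclotomic zeta m = \prod_(w <- prim_roots zeta m) ('X - w%:P).
Proof.
rewrite /cyclotomic big_map big_filter.
by rewrite (_ : iota 0 m = index_iota 0 m) ?big_mkord // /index_iota subn0.
Qed.

Lemma size_prim_roots (zeta : algC) (m : nat) :
  size (prim_roots zeta m) = totient m.
Proof.
have := size_cyclotomic zeta m.
by rewrite cyclotomic_prim_roots size_prod_XsubC => -[].
Qed.

Lemma prim_roots_uniq (zeta : algC) (m : nat) :
  m.-primitive_root zeta -> uniq (prim_roots zeta m).
Proof.
move=> prim; rewrite map_inj_in_uniq ?filter_uniq ?iota_uniq // => i j.
rewrite !mem_filter !mem_iota /= => /andP[_ lt_im] /andP[_ lt_jm] /eqP.
by rewrite (eq_prim_root_expr prim) !modn_small // => /eqP.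
Qed.

Lemma mem_prim_roots (zeta w : algC) (m : nat) :
  w \in prim_roots zeta m -> exists2 k, coprime k m & w = zeta ^+ k.
Proof. by case/mapP=> k; rewrite mem_filter => /andP[co_km _] ->; exists k. Qed.

Lemma prim_root_in_prim_roots (zeta : algC) (m : nat) :
  m.-primitive_root zeta -> zeta \in prim_roots zeta m.
Proof.
by move=> prim; rewrite -root_prod_XsubC -cyclotomic_prim_roots root_cyclotomic.
Qed.

Lemma root_Phi_prim_roots (zeta w : algC) (m : nat) :
  m.-primitive_root zeta -> w \in prim_roots zeta m -> root (liftC 'Phi_m) w.
Proof.
move=> prim w_in.
by rewrite (Cintr_Cyclotomic prim) cyclotomic_prim_roots root_prod_XsubC.
Qed.

(* Galois conjugation: an integer polynomial that does not vanish at zeta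
   does not vanish at any conjugate zeta^k either, because zeta^k = u zeta
   for a field automorphism u fixing the integer coefficients. *)
Lemma conj_horner_neq0 (P : {poly int}) (zeta : algC) (m k : nat) :
  m.-primitive_root zeta -> coprime k m ->
  (liftC P).[zeta] != 0 -> (liftC P).[zeta ^+ k] != 0.
Proof.
move=> prim co_km Pzeta_neq0; have [u Du] := Qn_aut_exists co_km.
have uP : map_poly u (liftC P) = liftC P.
  by rewrite -map_poly_comp; apply: eq_map_poly => z /=; rewrite rmorph_int.
by rewrite -(Du zeta (prim_expr_order prim)) -uP horner_map fmorph_eq0.
Qed.

Lemma horner_rmodp_root (Phi p : {poly int}) (x : algC) :
  Phi \is monic -> root (liftC Phi) x ->
  (liftC (Pdiv.Ring.rmodp p Phi)).[x] = (liftC p).[x].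
Proof.
move=> Phi_monic /eqP Phi_x.
rewrite [in RHS](Pdiv.RingMonic.rdivp_eq Phi_monic p).
by rewrite rmorphD rmorphM /= hornerD hornerM Phi_x mulr0 add0r.
Qed.

Lemma det_Vandermonde_neq0 (F : idomainType) (n : nat) (w : 'I_n -> F) :
  injective w -> \det (Vandermonde n (\row_k w k)) != 0.
Proof.
move=> w_inj; rewrite det_Vandermonde.
apply/prodf_neq0 => i _; apply/prodf_neq0 => j lt_ij.
rewrite !mxE subr_eq0; apply: contraTneq lt_ij => /w_inj ->.
by rewrite ltnn.
Qed.

(* Integrality of the norm: if w_0, ..., w_(n-1) are the distinct roots of a
   monic integer polynomial Phi of degree n, then for every integer
   polynomial P the product of the P(w_k) is an integer.  Indeed, with M the
   matrix of multiplication by P on Z[X]/(Phi) in the basis of monomials and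
   W the Vandermonde matrix of the w_k, we have M W = W diag(P(w_k)). *)
Lemma prod_roots_int (Phi P : {poly int}) (n : nat) (w : 'I_n -> algC) :
  Phi \is monic -> size Phi = n.+1 -> injective w ->
  (forall k, root (liftC Phi) (w k)) ->
  \prod_k (liftC P).[w k] \is a Num.int.
Proof.
move=> Phi_monic size_Phi w_inj root_w.
pose R j := Pdiv.Ring.rmodp (P * 'X^j) Phi.
have size_R j : (size (R j) <= n)%N.
  have := Pdiv.Ring.ltn_rmodp (P * 'X^j) Phi.
  by rewrite size_Phi monic_neq0.
have R_roots j k :
    \sum_(i < n) ((R j)`_i)%:~R * w k ^+ i = (liftC P).[w k] * w k ^+ j.
  under eq_bigr => i _ do rewrite -(coef_map (intr : int -> algC)).
  rewrite -horner_coef_wide ?(leq_trans (size_poly _ _)) //.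
  by rewrite horner_rmodp_root // rmorphM /= map_polyXn hornerM hornerXn.
pose M : 'M[int]_n := \matrix_(j, i) (R j)`_i.
pose W : 'M[algC]_n := Vandermonde n (\row_k w k).
pose D : 'rV[algC]_n := \row_k (liftC P).[w k].
have MW : map_mx intr M *m W = W *m diag_mx D.
  apply/matrixP => j k; rewrite mul_mx_diag !mxE mulrC -R_roots.
  by apply: eq_bigr => i _; rewrite !mxE.
have /(congr1 determinant) := MW.
rewrite det_mulmx det_map_mx det_mulmx det_diag [RHS]mulrC.
move=> /(mulIf (det_Vandermonde_neq0 w_inj)) detM.
rewrite (eq_bigr (fun k => D 0 k)) => [|k _]; last by rewrite mxE.
by rewrite -detM rpred_int.
Qed.

Lemma factor_lower_bound (R : numFieldType) (n : nat) (f : 'I_n -> R)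
    (k0 : 'I_n) (B : R) :
  0 < B -> 1 <= `|\prod_k f k| -> (forall k, k != k0 -> `|f k| <= B) ->
  1 / B ^+ n.-1 <= `|f k0|.
Proof.
move=> B_gt0 prod_ge1 f_le_B; rewrite ler_pdivrMr ?exprn_gt0 //.
apply: le_trans prod_ge1 _.
rewrite (bigD1 k0) //= normrM ler_wpM2l ?normr_ge0 // normr_prod.
apply: le_trans (_ : \prod_(k < n | k != k0) B <= _).
  by apply: ler_prod => k /f_le_B ->; rewrite normr_ge0.
by rewrite prodr_const cardC1 card_ord.
Qed.

Definition repr_poly (m : nat) (a : 'I_(totient m) -> int) : {poly int} :=
  \sum_(i < totient m) (a i)%:P * 'X^i.

Lemma horner_repr_poly (m : nat) (x : algC) (a : 'I_(totient m) -> int) :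
  (liftC (repr_poly a)).[x] = repr_val x a.
Proof.
rewrite rmorph_sum horner_sum; apply: eq_bigr => i _.
by rewrite rmorphM /= map_polyC map_polyXn hornerCM hornerXn.
Qed.

Lemma norm_repr_val_sub_le (m : nat) (A : int) (x : algC)
    (a b : 'I_(totient m) -> int) :
  `|x| = 1 -> repr_bounded A a -> repr_bounded A b ->
  `|repr_val x a - repr_val x b| <= (2 * A * (totient m)%:Z)%:~R.
Proof.
move=> x_unit a_bd b_bd; rewrite /repr_val -sumrB.
apply: le_trans (ler_norm_sum _ _ _) _.
apply: le_trans (_ : \sum_(i < totient m) ((2 * A)%:~R : algC) <= _).
  apply: ler_sum => i _; rewrite -mulrBl -intrB normrM normrX x_unit expr1n.
  rewrite mulr1 -intr_norm ler_int.
  have /andP[? ?] := a_bd i; have /andP[? ?] := b_bd i.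
  by rewrite ler_norml; apply/andP; split; lia.
by rewrite sumr_const card_ord [X in _ <= X]intrM -pmulrn mulr_natr.
Qed.

Theorem mainTheorem8 (m : nat) (A : int) (zeta : algC)
  (a b : 'I_(totient m) -> int) :
  (1 <= m)%N -> 1 <= A -> m.-primitive_root zeta ->
  repr_bounded A a -> repr_bounded A b ->
  repr_val zeta a != repr_val zeta b ->
  1 / ((2 * A * (totient m)%:Z + 1)%:~R ^+ (totient m).-1)
    <= `|repr_val zeta a - repr_val zeta b|.
Proof.
move=> m_gt0 A_ge1 prim a_bd b_bd a_neq_b.
pose P := repr_poly a - repr_poly b.
have PE x : (liftC P).[x] = repr_val x a - repr_val x b.
  by rewrite rmorphB hornerD hornerN !horner_repr_poly.
pose s := prim_roots zeta m; pose w (k : 'I_(totient m)) := s`_k.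
have w_in k : w k \in s by rewrite mem_nth // size_prim_roots.
have w_inj : injective w.
  move=> i j /eqP; rewrite nth_uniq ?size_prim_roots ?prim_roots_uniq //.
  by move/eqP/val_inj.
have norm_int : \prod_k (liftC P).[w k] \is a Num.int.
  apply: prod_roots_int (Cyclotomic_monic m) (size_Cyclotomic m) w_inj _ => k.
  exact: root_Phi_prim_roots prim (w_in k).
have norm_neq0 : \prod_k (liftC P).[w k] != 0.
  apply/prodf_neq0 => k _; have [j co_jm ->] := mem_prim_roots (w_in k).
  by apply: conj_horner_neq0 prim co_jm _; rewrite PE subr_eq0.
have zeta_idx : (index zeta s < totient m)%N.
  by rewrite -(size_prim_roots zeta m) index_mem prim_root_in_prim_roots.
have w_zeta : w (Ordinal zeta_idx) = zeta.
  exact: nth_index (prim_root_in_prim_roots prim).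
rewrite -PE -w_zeta.
apply: factor_lower_bound (norm_intr_ge1 norm_int norm_neq0) _ => [|k _].
  by rewrite ltr0z; lia.
have [j _ w_pow] := mem_prim_roots (w_in k).
rewrite PE; apply: le_trans (norm_repr_val_sub_le _ a_bd b_bd) _.
  rewrite w_pow; apply: norm_unity_root m_gt0 _.
  by rewrite exprAC (prim_expr_order prim) expr1n.
by rewrite ler_int lerDl.
Qed.
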